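(* Let $U\in\mathcal U_n$ and let $U'\in\mathcal U_{n+1}$ be obtained from $U$ by adding an $(n+1)$-st unit interval $I_{n+1}$ to the right of the intervals of $U$. Then the Dyck path $p(U')$ is obtained from $p(U)$ by adding a final maximal peak.
   Context: A unit interval order on $\{1,\dots,n\}$ is given by closed intervals $I_1,\dots,I_n$ of length $1$ in $\mathbb R$, numbered from left to right, with $i\prec j$ iff $I_i$ lies strictly to the left of $I_j$; $\mathcal U_n$ is the set of these. ''Adding an interval to the right'' means $I_{n+1}$ is a unit interval placed so that $I_1,\dots,I_{n+1}$ are still numbered from left to right. A Dyck path of length $n$ is a lattice path from $(0,0)$ to $(n,n)$ with up steps $a$ and right steps $b$ never going below $y=x$; its area sequence lists row by row from bottom to top the number of unit boxes between path and diagonal. For a nonnegative integer sequence $w=(w_1,\dots,w_n)$, $P(w)$ is the poset on $\{1,\dots,n\}$ with $i\prec j$ iff $w_j-w_i\ge2$, or $w_j-w_i=1$ and $i<j$. For each $U\in\mathcal U_n$ there is a unique $w$ that is the area sequence of a Dyck path with $P(w)$ isomorphic to $U$; $p(U)$ is the Dyck path with this area sequence. A peak is an up step immediately followed by a right step (a factor $ab$); adding a peak means inserting the factor $ab$ somewhere into the word of the path. A peak is maximal if the top of its up step lies on the highest line of slope $1$ touching the path; the final maximal peak is the last maximal peak of the path. ''Adding a final maximal peak'' means the inserted peak is the final maximal peak of the resulting path. *)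

From HB Require Import structures.
From mathcomp Require Import all_boot all_order all_algebra.
Set Implicit Arguments. Unset Strict Implicit. Unset Printing Implicit Defensive.
Import Order.TTheory GRing.Theory Num.Theory.
Local Open Scope ring_scope.

(* Elements of {1,...,n} are represented 0-based by 0,...,n-1 (order preserved). *)

(** A configuration of n unit intervals numbered from
    left to right is given by the sorted sequence [x] of their left endpoints:
    I_i = [x_i, x_i + 1].  i precedes j iff I_i lies strictly left of I_j. *)
Definition uio_rel {R : realFieldType} (x : seq R) : rel nat :=
  fun i j => nth 0 x i + 1 < nth 0 x j.

Definition unit_interval_config {R : realFieldType} (n : nat) (x : seq R) : Prop :=
  size x = n /\ sorted <=%R x.

(** Dyck words: true = up step a, false = right step b. *)
Definition height (D : seq bool) (k : nat) : int :=
  (count id (take k D))%:Z - (count negb (take k D))%:Z.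

Definition dyck (n : nat) (D : seq bool) : Prop :=
  size D = (2 * n)%N /\ count id D = n /\ (forall k, 0 <= height D k).

(** Area sequence: for the i-th up step (row i, bottom to top), the number of
    full boxes between path and diagonal in that row equals
    (#a - #b) before that up step. *)
Definition area (D : seq bool) : seq nat :=
  [seq (count id (take k D) - count negb (take k D))%N
   | k <- iota 0 (size D) & nth false D k].

Definition Pw (w : seq nat) : rel nat :=
  fun i j => ((nth 0%N w i + 2 <= nth 0%N w j)%N)
             || ((nth 0%N w j == (nth 0%N w i).+1) && (i < j)%N).

Definition rel_iso (n : nat) (r1 r2 : rel nat) : Prop :=
  exists f : 'I_n -> 'I_n, bijective f /\
    forall i j : 'I_n, r1 i j = r2 (f i) (f j).

Definition peak_at (D : seq bool) (k : nat) : Prop :=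
  (k.+1 < size D)%N /\ nth false D k = true /\ nth false D k.+1 = false.

(** Maximal peak: the top of its up step (the path point after k+1 steps)
    lies on the highest line of slope 1 touching the path, i.e. y - x is
    maximal among all lattice points of the path. *)
Definition max_peak_at (D : seq bool) (k : nat) : Prop :=
  peak_at D k /\ (forall j, (j <= size D)%N -> height D j <= height D k.+1).

Definition final_max_peak_at (D : seq bool) (k : nat) : Prop :=
  max_peak_at D k /\ (forall j, max_peak_at D j -> (j <= k)%N).

Definition adds_final_max_peak (D D' : seq bool) : Prop :=
  exists u v : seq bool,
    D = u ++ v /\ D' = u ++ [:: true; false] ++ v /\ final_max_peak_at D' (size u).

From HB Require Import structures.
From mathcomp Require Import all_boot all_order all_algebra.
From mathcomp Require Import zify.
Import Order.TTheory GRing.Theory Num.Theory.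

Set Implicit Arguments.
Unset Strict Implicit.
Unset Printing Implicit Defensive.

(* The number of predecessors (down-degree) of an element is invariant under
   poset isomorphism.  In P(w), for an area sequence w, the entry at the last
   maximum of w has the largest down-degree, and deleting it leaves an area
   sequence carrying the remaining down-degrees; as this largest down-degree
   determines both the value and the position of the deleted entry, the
   multiset of down-degrees determines w.  In U' the new rightmost interval has
   the largest down-degree and leaves the others unchanged, so area(p(U)) is
   area(p(U')) with its last maximum deleted.  On the path, that last maximum
   comes from an up step followed by a right step; deleting this peak gives
   p(U), and the peak is maximal and final because every later row has a
   smaller area. *)

(* Path notions for a path started at height [h]; the truncated [h.-1] is
   harmless along a [nonneg_path]. *)
Fixpoint nonneg_path (h : nat) (D : seq bool) : bool :=
  match D with
  | [::] => true
  | true :: D' => nonneg_path h.+1 D'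
  | false :: D' => (0 < h) && nonneg_path h.-1 D'
  end.

Fixpoint end_height (h : nat) (D : seq bool) : nat :=
  match D with
  | [::] => h
  | true :: D' => end_height h.+1 D'
  | false :: D' => end_height h.-1 D'
  end.

Fixpoint areas (h : nat) (D : seq bool) : seq nat :=
  match D with
  | [::] => [::]
  | true :: D' => h :: areas h.+1 D'
  | false :: D' => areas h.-1 D'
  end.

Definition level (h : nat) (D : seq bool) (j : nat) : nat :=
  h + count id (take j D) - count negb (take j D).

Lemma nonneg_path_cat h u v :
  nonneg_path h (u ++ v) = nonneg_path h u && nonneg_path (end_height h u) v.
Proof. by elim: u h => [|[] u IH] h //=; rewrite IH ?andbA. Qed.

Lemma end_height_cat h u v : end_height h (u ++ v) = end_height (end_height h u) v.
Proof. by elim: u h => [|[] u IH] h //=. Qed.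

Lemma areas_cat h u v : areas h (u ++ v) = areas h u ++ areas (end_height h u) v.
Proof. by elim: u h => [|[] u IH] h //=; rewrite IH. Qed.

Lemma size_areas h D : size (areas h D) = count id D.
Proof. by elim: D h => [|[] D IH] h //=; rewrite IH. Qed.

Lemma nonneg_path_count h D : nonneg_path h D ->
  count negb D <= h + count id D /\ end_height h D = h + count id D - count negb D.
Proof.
elim: D h => [|[] D IH] h /=; first by rewrite addn0 subn0.
  by move=> /IH[]; lia.
by case/andP=> h_gt0 /IH[]; lia.
Qed.

Lemma nonneg_pathP h D :
  reflect (forall j, count negb (take j D) <= h + count id (take j D))
          (nonneg_path h D).
Proof.
apply: (iffP idP) => [nnD j | ].
  have : nonneg_path h (take j D ++ drop j D) by rewrite cat_take_drop.
  by rewrite nonneg_path_cat => /andP[/nonneg_path_count[]].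
elim: D h => [|[] D IH] h bounded //=.
  by apply: IH => j; have := bounded j.+1; rewrite /=; lia.
apply/andP; split; first by have := bounded 1; rewrite /= take0 /=; lia.
by apply: IH => j; have := bounded j.+1; rewrite /=; lia.
Qed.

Lemma height_level D j : nonneg_path 0 D -> height D j = level 0 D j.
Proof. by move=> /nonneg_pathP/(_ j) le_ba; rewrite /height subzn. Qed.

Lemma level_cat h u v j : nonneg_path h u ->
  level h (u ++ v) (size u + j) = level (end_height h u) v j.
Proof.
move=> /nonneg_path_count[le_ba ->].
by rewrite /level take_cat ltnNge leq_addr /= addKn !count_cat; lia.
Qed.

Lemma level_le_of_areas h D M : nonneg_path h D -> h <= M ->
  {in areas h D, forall a, a < M} -> forall j, level h D j <= M.
Proof.
rewrite /level; elim: D h => [|[] D IH] h /=.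
- by move=> _ le_hM _ j; lia.
- move=> nnD le_hM lt_aM [|j] /=; first lia.
  have le_h1M : h.+1 <= M by apply: lt_aM; exact: mem_head.
  have lt_aM' : {in areas h.+1 D, forall a, a < M}.
    by move=> a aD; apply: lt_aM; rewrite inE aD orbT.
  by have := IH _ nnD le_h1M lt_aM' j; lia.
- move=> /andP[h_gt0 nnD] le_hM lt_aM [|j] /=; first lia.
  have := IH _ nnD (leq_trans (leq_pred h) le_hM) lt_aM j; lia.
Qed.

Lemma areas_head h D a s : areas h D = a :: s -> a <= h.
Proof. by elim: D h => [|[] D IH] h //= => [[->] | /IH]; lia. Qed.

Lemma end_height_no_up h D : nonneg_path h D -> count id D = 0 ->
  end_height h D + size D = h.
Proof. by elim: D h => [|[] D IH] h //= => [|/andP[h_gt0 /IH]]; lia. Qed.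

Lemma areas_inj h D1 D2 : nonneg_path h D1 -> nonneg_path h D2 ->
  end_height h D1 = end_height h D2 -> areas h D1 = areas h D2 -> D1 = D2.
Proof.
elim: D1 h D2 => [|b1 D1 IH] h [|b2 D2] //.
- move=> _ nnD2 eh eA; have := end_height_no_up nnD2.
  by rewrite -(size_areas h) -eA -eh /=; lia.
- move=> nnD1 _ eh eA; have := end_height_no_up nnD1.
  by rewrite -(size_areas h) eA eh /=; lia.
case: b1; case: b2 => /=.
- by move=> nnD1 nnD2 eh [eA]; rewrite (IH _ _ nnD1 nnD2 eh eA).
- by move=> _ /andP[h_gt0 _] _ /esym/areas_head; lia.
- by move=> /andP[h_gt0 _] _ _ /areas_head; lia.
- by move=> /andP[_ nnD1] /andP[_ nnD2] eh eA; rewrite (IH _ _ nnD1 nnD2 eh eA).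
Qed.

Lemma areas_level h D : nonneg_path h D ->
  [seq level h D k | k <- iota 0 (size D) & nth false D k] = areas h D.
Proof.
elim: D h => [|b D IH] h //= nnD.
rewrite (iotaDl 1 0) filter_map.
case: b nnD => /= [|/andP[h_gt0]] nnD;
  rewrite -map_comp (eq_filter (a2 := nth false D)) // -IH //.
  congr (_ :: _); first by rewrite /level take0 /=; lia.
all: by apply: eq_map => k; rewrite /level /= !add0n; lia.
Qed.

Lemma area_areas D : nonneg_path 0 D -> area D = areas 0 D.
Proof. by move=> nnD; rewrite -areas_level //; apply: eq_map. Qed.

Lemma dyck_nonneg_path n D : dyck n D ->
  [/\ nonneg_path 0 D, end_height 0 D = 0 & count id D = n].
Proof.
case=> size_D [count_D height_ge0].
have nnD : nonneg_path 0 D.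
  by apply/nonneg_pathP => j; move: (height_ge0 j); rewrite /height subr_ge0 lez_nat.
split=> //; have [_ ->] := nonneg_path_count nnD.
have := count_predC id D; rewrite size_D count_D (_ : count (predC id) D = count negb D) //; lia.
Qed.

Definition down_degree (r : rel nat) (n j : nat) : nat := count (r^~ j) (iota 0 n).

Definition down_degrees (r : rel nat) (n : nat) : seq nat :=
  map (down_degree r n) (iota 0 n).

Lemma perm_map_enum_bij n (f : 'I_n -> 'I_n) : bijective f ->
  perm_eq (map f (enum 'I_n)) (enum 'I_n).
Proof.
case=> g fK gK; apply: uniq_perm; last 1 first.
- by move=> i; rewrite mem_enum; apply/mapP; exists (g i); rewrite ?mem_enum ?gK.
- by rewrite map_inj_uniq ?enum_uniq //; apply: can_inj fK.
- exact: enum_uniq.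
Qed.

Lemma down_degree_ord r n j :
  down_degree r n j = count (fun i : 'I_n => r i j) (enum 'I_n).
Proof. by rewrite /down_degree -val_enum_ord count_map. Qed.

Lemma rel_iso_down_degrees n r1 r2 : rel_iso n r1 r2 ->
  perm_eq (down_degrees r1 n) (down_degrees r2 n).
Proof.
case=> f [bij_f r1E]; have perm_f := perm_map_enum_bij bij_f.
have degE (j : 'I_n) : down_degree r1 n j = down_degree r2 n (f j).
  rewrite !down_degree_ord (eq_count (a2 := preim f (r2^~ (f j)))) => [|i].
    by rewrite -count_map (permP perm_f).
  by rewrite /= r1E.
have -> : down_degrees r1 n = map (down_degree r2 n \o val) (map f (enum 'I_n)).
  by rewrite /down_degrees -val_enum_ord -!map_comp; apply: eq_map => j; exact: degE.
by rewrite /down_degrees -val_enum_ord -map_comp; apply: perm_map.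
Qed.

Lemma perm_max_eq (s1 s2 : seq nat) a1 a2 : perm_eq s1 s2 ->
  a1 \in s1 -> {in s1, forall b, b <= a1} ->
  a2 \in s2 -> {in s2, forall b, b <= a2} -> a1 = a2.
Proof.
move=> perm_s a1_s1 max1 a2_s2 max2; apply/eqP; rewrite eqn_leq.
by rewrite max2 -?(perm_mem perm_s) // max1 ?(perm_mem perm_s).
Qed.

Definition is_area_seq (h : nat) (w : seq nat) : Prop :=
  forall i, i < size w -> nth 0 w i <= (if i is j.+1 then (nth 0 w j).+1 else h).

Lemma areas_is_area_seq h D : is_area_seq h (areas h D).
Proof.
elim: D h => [|[] D IH] h //=.
  by move=> [|i] //= lt_i; have := IH h.+1 i lt_i; case: i lt_i.
move=> [|i] lt_i; last exact: IH.
by have := IH h.-1 0 lt_i => /=; lia.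
Qed.

Definition Pw_degree (w : seq nat) : nat -> nat := down_degree (Pw w) (size w).

Definition Pw_degrees (w : seq nat) : seq nat := down_degrees (Pw w) (size w).

Definition last_max (w : seq nat) (k : nat) : Prop :=
  [/\ k < size w, forall i, nth 0 w i <= nth 0 w k
    & forall i, k < i < size w -> nth 0 w i < nth 0 w k].

Lemma last_max_exists w : w != [::] -> exists k, last_max w k.
Proof.
elim: w => [//|a w IH] _.
have [->|/IH[k [lt_k max_k after_k]]] := eqVneq w [::].
  by exists 0; split=> // -[|[|i]] /=; rewrite ?nth_nil.
have [lt_wk_a|le_a_wk] := ltnP (nth 0 w k) a.
- exists 0; split=> // -[|i] //=; first by move: (max_k i); lia.
  by move: (max_k i); lia.
- exists k.+1; split=> // -[|i] //=; exact: after_k.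
Qed.

Definition rem_nth (k : nat) (w : seq nat) : seq nat := take k w ++ drop k.+1 w.

Lemma size_rem_nth k w : k < size w -> size (rem_nth k w) = (size w).-1.
Proof. by move=> lt_k; rewrite size_cat size_take size_drop lt_k; lia. Qed.

Lemma nth_rem_nth k w j : k < size w -> nth 0 (rem_nth k w) j = nth 0 w (bump k j).
Proof.
move=> lt_k; rewrite nth_cat size_take lt_k /bump.
case: ltnP => [lt_jk|le_kj]; first by rewrite nth_take // ltnNge lt_jk.
by rewrite nth_drop; congr nth; lia.
Qed.

Lemma rem_nthK k w : k < size w ->
  take k (rem_nth k w) ++ nth 0 w k :: drop k (rem_nth k w) = w.
Proof.
move=> lt_k; have size_k : size (take k w) = k by rewrite size_take lt_k.
by rewrite take_size_cat // drop_size_cat // -(drop_nth 0 lt_k) cat_take_drop.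
Qed.

Lemma rem_nth_cat a m b : rem_nth (size a) (a ++ m :: b) = a ++ b.
Proof. by rewrite /rem_nth take_size_cat // -cat_rcons drop_size_cat ?size_rcons. Qed.

Lemma Pw_rem_nth k w i j : k < size w ->
  Pw (rem_nth k w) i j = Pw w (bump k i) (bump k j).
Proof.
move=> lt_k; rewrite /Pw !nth_rem_nth //; congr (_ || (_ && _)).
by rewrite /bump; case: (leqP k i); case: (leqP k j); lia.
Qed.

Lemma perm_iota_bump k n : k < n ->
  perm_eq (iota 0 n) (k :: map (bump k) (iota 0 n.-1)).
Proof.
move=> lt_k; apply: uniq_perm; first exact: iota_uniq.
  rewrite /= map_inj_uniq ?iota_uniq ?andbT; last exact: can_inj (bumpK k).
  by apply/mapP => -[i _ /eqP]; rewrite (negbTE (neq_bump k i)).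
move=> i; rewrite inE mem_iota add0n; apply/idP/idP => [lt_i|].
  have [-> //|ne_ik] := eqVneq i k; apply/orP; right; apply/mapP.
  exists (unbump k i); last by rewrite unbumpKcond (negbTE ne_ik).
  by rewrite mem_iota /unbump; lia.
case/orP=> [/eqP-> //|/mapP[j]]; rewrite mem_iota => lt_j ->.
by rewrite /bump; lia.
Qed.

Lemma count_iota_bump (p : pred nat) k n : k < n ->
  count p (iota 0 n) = p k + count (p \o bump k) (iota 0 n.-1).
Proof. by move=> lt_k; rewrite (permP (perm_iota_bump lt_k)) /= count_map. Qed.

Lemma Pw_last_max_maximal w k j : last_max w k -> Pw w k j = false.
Proof. by case=> _ max_k _; have := max_k j; rewrite /Pw; lia. Qed.

Lemma Pw_degree_rem_nth w k j : last_max w k ->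
  Pw_degree (rem_nth k w) j = Pw_degree w (bump k j).
Proof.
move=> L; have [lt_k _ _] := L.
rewrite /Pw_degree /down_degree (count_iota_bump _ lt_k) /= Pw_last_max_maximal //.
by rewrite size_rem_nth //; apply: eq_count => i; rewrite /= Pw_rem_nth.
Qed.

Lemma perm_Pw_degrees_rem_nth w k : last_max w k ->
  perm_eq (Pw_degrees w) (Pw_degree w k :: Pw_degrees (rem_nth k w)).
Proof.
move=> L; have [lt_k _ _] := L.
rewrite /Pw_degrees /down_degrees (permPl (perm_map _ (perm_iota_bump lt_k))) /=.
by rewrite perm_cons -map_comp -(size_rem_nth lt_k) (eq_map (fun j => Pw_degree_rem_nth j L)).
Qed.

Lemma mem_Pw_degrees w k : k < size w -> Pw_degree w k \in Pw_degrees w.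
Proof. by move=> lt_k; apply: map_f; rewrite mem_iota. Qed.

Lemma Pw_degree_le_last_max w k : last_max w k ->
  {in Pw_degrees w, forall d, d <= Pw_degree w k}.
Proof.
case=> lt_k max_k after_k d /mapP[j]; rewrite mem_iota => /andP[_ lt_j] ->.
apply: sub_count => i; rewrite /Pw; have := max_k j.
by case: (ltnP k j) => [lt_kj|]; [have := after_k j; lia | lia].
Qed.

Lemma is_area_seq_rem_last_max w k : is_area_seq 0 w -> last_max w k ->
  is_area_seq 0 (rem_nth k w).
Proof.
move=> area_w [lt_k _ after_k] i; rewrite size_rem_nth // => lt_i.
case: i lt_i => [|i] lt_i; rewrite !nth_rem_nth // /bump.
  case: k lt_k after_k => [|k] lt_k after_k /=; last by apply: area_w; lia.
  by have := after_k 1; have := area_w 0; lia.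
case: (ltngtP k i.+1) => [lt_ki|lt_ik|eq_ki] /=.
- have -> : (k <= i) = true by lia.
  by rewrite !add1n; apply: area_w; lia.
- have -> : (k <= i) = false by lia.
  by rewrite !add0n; apply: area_w; lia.
- subst k; rewrite ltnn add1n add0n.
  by have := after_k i.+2; have := area_w i.+1; lia.
Qed.

Definition insert_degree (v : seq nat) (k h : nat) : nat :=
  count (fun i => (nth 0 v i + 2 <= h) || (h == (nth 0 v i).+1) && (i < k))
        (iota 0 (size v)).

Definition last_max_insertable (v : seq nat) (k h : nat) : Prop :=
  [/\ k <= size v, forall i, nth 0 v i <= h,
      forall i, k <= i < size v -> nth 0 v i < h
    & if k is k'.+1 then h <= (nth 0 v k').+1 else h = 0].

Lemma Pw_degree_last_max w k : last_max w k ->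
  Pw_degree w k = insert_degree (rem_nth k w) k (nth 0 w k).
Proof.
move=> L; have [lt_k _ _] := L.
rewrite /Pw_degree /down_degree (count_iota_bump _ lt_k) /= Pw_last_max_maximal //.
rewrite /insert_degree size_rem_nth //; apply: eq_count => i /=.
by rewrite /Pw nth_rem_nth // /bump; case: (leqP k i); lia.
Qed.

Lemma last_max_insertable_rem w k : is_area_seq 0 w -> last_max w k ->
  last_max_insertable (rem_nth k w) k (nth 0 w k).
Proof.
move=> area_w [lt_k max_k after_k]; split.
- by rewrite size_rem_nth //; lia.
- by move=> i; rewrite nth_rem_nth.
- move=> i; rewrite size_rem_nth // nth_rem_nth // /bump => /andP[le_ki lt_i].
  by rewrite le_ki add1n; apply: after_k; lia.
- case: k lt_k after_k max_k => [|k] lt_k _ _; first by have := area_w 0 lt_k; lia.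
  by rewrite nth_rem_nth // /bump ltnn add0n; apply: area_w.
Qed.

Lemma count_lt_sub (T : eqType) (p q : pred T) s x : subpred p q ->
  x \in s -> q x -> ~~ p x -> count p s < count q s.
Proof.
move=> le_pq; elim: s => [//|y s IH]; rewrite inE /=.
case/orP=> [/eqP <- qx /negbTE -> | xs qx npx]; rewrite ?qx.
  by rewrite add0n add1n ltnS sub_count.
rewrite -addnS; apply: leq_add (IH xs qx npx).
by case: (p y) (le_pq y) => // ->.
Qed.

Lemma ltn_insert_degree_height v k1 h1 k2 h2 :
  last_max_insertable v k1 h1 -> last_max_insertable v k2 h2 -> h1 < h2 ->
  insert_degree v k1 h1 < insert_degree v k2 h2.
Proof.
case=> _ le_h1 _ _ [le_k2 _ _]; case: k2 le_k2 => [|k] le_k2 le_h2 lt_h; first lia.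
have := le_h1 k => le_vk_h1.
by apply: (count_lt_sub (x := k)) => [i|||]; rewrite /= ?mem_iota; lia.
Qed.

Lemma ltn_insert_degree_pos v k1 k2 h :
  last_max_insertable v k1 h -> last_max_insertable v k2 h -> k1 < k2 ->
  insert_degree v k1 h < insert_degree v k2 h.
Proof.
case=> _ _ after_k1 _ [le_k2 _ _]; case: k2 le_k2 => [|k] le_k2 le_h lt_k; first lia.
have := after_k1 k => lt_vk_h.
by apply: (count_lt_sub (x := k)) => [i|||]; rewrite /= ?mem_iota; lia.
Qed.

Lemma insert_degree_inj v k1 h1 k2 h2 :
  last_max_insertable v k1 h1 -> last_max_insertable v k2 h2 ->
  insert_degree v k1 h1 = insert_degree v k2 h2 -> k1 = k2 /\ h1 = h2.
Proof.
move=> ins1 ins2 eq_deg.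
have eq_h : h1 = h2.
  case: (ltngtP h1 h2) => // lt_h; move: eq_deg.
    by have := ltn_insert_degree_height ins1 ins2 lt_h; lia.
  by have := ltn_insert_degree_height ins2 ins1 lt_h; lia.
subst h2; split=> //; case: (ltngtP k1 k2) => // lt_k; move: eq_deg.
  by have := ltn_insert_degree_pos ins1 ins2 lt_k; lia.
by have := ltn_insert_degree_pos ins2 ins1 lt_k; lia.
Qed.

Lemma area_seq_Pw_degrees_inj w1 w2 : size w1 = size w2 ->
  is_area_seq 0 w1 -> is_area_seq 0 w2 ->
  perm_eq (Pw_degrees w1) (Pw_degrees w2) -> w1 = w2.
Proof.
move eq_n : (size w1) => n; elim: n w1 w2 eq_n => [|n IH] w1 w2.
  by move/size0nil-> => /esym/size0nil->.
move=> size_w1 size_w2 area_w1 area_w2 perm_w.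
have [k1 L1] : exists k, last_max w1 k by apply: last_max_exists; rewrite -size_eq0 size_w1.
have [k2 L2] : exists k, last_max w2 k by apply: last_max_exists; rewrite -size_eq0 -size_w2.
have [lt_k1 _ _] := L1; have [lt_k2 _ _] := L2.
have eq_deg : Pw_degree w1 k1 = Pw_degree w2 k2.
  apply: (perm_max_eq perm_w); rewrite ?mem_Pw_degrees //; exact: Pw_degree_le_last_max.
have eq_rem : rem_nth k1 w1 = rem_nth k2 w2.
  apply: IH; try exact: is_area_seq_rem_last_max.
  - by rewrite size_rem_nth // size_w1.
  - by rewrite size_rem_nth // -size_w2.
  rewrite -(perm_cons (Pw_degree w1 k1)) {2}eq_deg.
  by rewrite -(permPl (perm_Pw_degrees_rem_nth L1)) -(permPr (perm_Pw_degrees_rem_nth L2)).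
have [eq_k eq_h] : k1 = k2 /\ nth 0 w1 k1 = nth 0 w2 k2.
  apply: insert_degree_inj; first exact: last_max_insertable_rem area_w1 L1.
    by rewrite eq_rem; exact: last_max_insertable_rem area_w2 L2.
  by rewrite -Pw_degree_last_max // eq_rem -Pw_degree_last_max.
by rewrite -(rem_nthK lt_k1) -(rem_nthK lt_k2) eq_rem eq_h eq_k.
Qed.

Lemma size_Pw_degrees w : size (Pw_degrees w) = size w.
Proof. by rewrite size_map size_iota. Qed.

Lemma rem_last_max_of_Pw_degrees w w' k s c :
  is_area_seq 0 w -> is_area_seq 0 w' -> last_max w' k ->
  perm_eq (Pw_degrees w) s -> perm_eq (Pw_degrees w') (rcons s c) ->
  {in rcons s c, forall d, d <= c} -> rem_nth k w' = w.
Proof.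
move=> area_w area_w' L perm_w perm_w' max_c; have [lt_k _ _] := L.
have eq_c : c = Pw_degree w' k.
  apply: (perm_max_eq (s1 := rcons s c) (s2 := Pw_degrees w')) => //.
  - by rewrite perm_sym.
  - by rewrite mem_rcons mem_head.
  - exact: mem_Pw_degrees.
  - exact: Pw_degree_le_last_max.
have perm_rem : perm_eq (Pw_degrees (rem_nth k w')) (Pw_degrees w).
  rewrite (permPr perm_w) -(perm_cons c) perm_sym -(perm_rcons c s).
  by rewrite -(permPl perm_w') eq_c perm_Pw_degrees_rem_nth.
apply: area_seq_Pw_degrees_inj perm_rem; last exact: area_w.
  rewrite size_rem_nth // -(size_Pw_degrees w') (perm_size perm_w') size_rcons.
  by rewrite -(perm_size perm_w) size_Pw_degrees.
exact: is_area_seq_rem_last_max.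
Qed.

Lemma last_max_cat a m b : last_max (a ++ m :: b) (size a) ->
  {in a ++ m :: b, forall z, z <= m} /\ {in b, forall z, z < m}.
Proof.
have nth_m : nth 0 (a ++ m :: b) (size a) = m by rewrite nth_cat ltnn subnn.
case; rewrite nth_m => _ max_m after_m; split=> z /(nthP 0)[i lt_i <-] //.
have := after_m (size a + i.+1).
rewrite nth_cat [X in if X then _ else _]ltnNge leq_addr addKn /=; apply.
by rewrite size_cat ltn_add2l ltnS lt_i -addSnnS leq_addr.
Qed.

Section UnitIntervalOrders.

Variables (R : realFieldType) (x : seq R) (y : R).
Hypothesis x_le_y : all (fun t => t <= y)%R x.

Let uio' := uio_rel (rcons x y).

Lemma nth_rcons_le j : j <= size x -> (nth 0 (rcons x y) j <= y)%R.
Proof.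
rewrite nth_rcons leq_eqVlt => /orP[/eqP->|lt_j]; first by rewrite ltnn eqxx.
by rewrite lt_j; apply: (allP x_le_y); rewrite mem_nth.
Qed.

Lemma down_degrees_uio_rcons :
  down_degrees uio' (size x).+1 =
  rcons (down_degrees (uio_rel x) (size x)) (down_degree uio' (size x).+1 (size x)).
Proof.
rewrite /down_degrees -addn1 iotaD map_cat add0n /= cats1; congr rcons.
apply/eq_in_map => j; rewrite mem_iota add0n => /andP[_ lt_j].
rewrite /down_degree iotaD count_cat add0n /= addn0.
have -> : uio' (size x) j = false.
  apply/negbTE; rewrite /uio' /uio_rel -leNgt [X in (_ <= X + _)%R]nth_rcons ltnn eqxx.
  by apply: le_trans (nth_rcons_le (ltnW lt_j)) _; rewrite lerDl ler01.
rewrite addn0; apply: eq_in_count => i; rewrite mem_iota add0n => /andP[_ lt_i].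
by rewrite /uio' /uio_rel !nth_rcons lt_i lt_j.
Qed.

Lemma down_degree_uio_rcons_max :
  {in down_degrees uio' (size x).+1, forall d, d <= down_degree uio' (size x).+1 (size x)}.
Proof.
move=> d /mapP[j]; rewrite mem_iota add0n ltnS => /andP[_ le_j] ->.
apply: sub_count => i; rewrite /uio' /uio_rel => /lt_le_trans; apply.
by rewrite [X in (_ <= X)%R]nth_rcons ltnn eqxx nth_rcons_le.
Qed.

End UnitIntervalOrders.

Lemma split_at_up D k : k < count id D ->
  exists u s, D = u ++ true :: s /\ count id u = k.
Proof.
elim: D k => [//|[] D IH] k /=.
- case: k => [|k] lt_k; first by exists [::], D.
  by have [u [s [-> <-]]] := IH k lt_k; exists (true :: u), s.
- by move=> /IH[u [s [-> <-]]]; exists (false :: u), s.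
Qed.

Lemma last_max_peak_split D k : end_height 0 D = 0 -> last_max (areas 0 D) k ->
  exists u v, D = u ++ [:: true; false] ++ v /\ count id u = k.
Proof.
move=> end_D L; have [lt_k _ _] := L; rewrite size_areas in lt_k.
have [u [s [eq_D count_u]]] := split_at_up lt_k.
rewrite eq_D areas_cat -count_u -(size_areas 0 u) in L.
rewrite eq_D end_height_cat in end_D.
exists u; case: s eq_D L end_D => [|[] v] eq_D L end_D //; last by exists v.
by have [_ /(_ _ (mem_head _ _))/ltnW] := last_max_cat L; rewrite ltnn.
Qed.

Lemma final_max_peak_at_last_max u v (D := u ++ [:: true; false] ++ v) :
  nonneg_path 0 D -> last_max (areas 0 D) (count id u) -> final_max_peak_at D (size u).
Proof.
move=> nn_D L; set h := end_height 0 u.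
have [nn_u nn_v] : nonneg_path 0 u /\ nonneg_path h v.
  by move: nn_D; rewrite nonneg_path_cat /= => /andP[].
have areas_D : areas 0 D = areas 0 u ++ h :: areas h v by rewrite areas_cat.
rewrite areas_D -(size_areas 0 u) in L; have [le_h lt_h] := last_max_cat L.
have height_peak : height D (size u).+1 = h.+1.
  by rewrite height_level // -addn1 level_cat // /level /=; congr Posz; lia.
have height_le j : (height D j <= h.+1)%R.
  rewrite height_level // lez_nat; apply: level_le_of_areas => // a.
  by rewrite areas_D => /le_h; rewrite ltnS.
have height_v j : (height D (size u + 2 + j) <= h)%R.
  rewrite height_level // /D -(size_cat u [:: true; false]) catA level_cat.
    by rewrite lez_nat end_height_cat; apply: level_le_of_areas.
  by rewrite nonneg_path_cat nn_u.
have size_D : (size u).+2 <= size D by rewrite size_cat /= addnS addnS ltnS leq_addr.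
have nth_D_up : nth false D (size u) = true by rewrite nth_cat ltnn subnn.
have nth_D_down : nth false D (size u).+1 = false.
  by rewrite nth_cat ltnNge leqnSn subSnn.
split; first split.
- by split.
- by move=> j _; rewrite height_peak.
move=> j [[_ [up_j _]] max_j]; rewrite leqNgt; apply/negP => lt_uj.
have [eq_j|ne_j] := eqVneq j (size u).+1; first by rewrite eq_j nth_D_down in up_j.
have := max_j (size u).+1 (ltnW size_D); rewrite height_peak.
rewrite (_ : j.+1 = size u + 2 + (j - (size u).+1)); last by move: ne_j; lia.
by move/le_trans/(_ (height_v _)); rewrite lez_nat ltnn.
Qed.

Lemma adds_final_max_peak_rem_last_max D D' k :
  nonneg_path 0 D -> end_height 0 D = 0 ->
  nonneg_path 0 D' -> end_height 0 D' = 0 -> last_max (areas 0 D') k ->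
  rem_nth k (areas 0 D') = areas 0 D -> adds_final_max_peak D D'.
Proof.
move=> nn_D end_D nn_D' end_D' L rem_D.
have [u [v [eq_D' count_u]]] := last_max_peak_split end_D' L; subst D' k.
exists u, v; split; last by split=> //; exact: final_max_peak_at_last_max.
move: nn_D' end_D' rem_D; set h := end_height 0 u.
rewrite nonneg_path_cat end_height_cat areas_cat -(size_areas 0 u) /= rem_nth_cat.
move=> /andP[nn_u nn_v] end_v areas_D; apply: (areas_inj (h := 0)) => //.
- by rewrite nonneg_path_cat nn_u.
- by rewrite end_height_cat end_D.
- by rewrite areas_cat.
Qed.

Unset Implicit Arguments.
Local Open Scope ring_scope.

Theorem mainTheorem7 (R : realFieldType) (n : nat) (x : seq R) (y : R)
    (D D' : seq bool) :
  unit_interval_config n x ->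
  all (fun t => t <= y) x ->
  dyck n D -> rel_iso n (uio_rel x) (Pw (area D)) ->
  dyck n.+1 D' -> rel_iso n.+1 (uio_rel (rcons x y)) (Pw (area D')) ->
  adds_final_max_peak D D'.
Proof.
move=> [size_x _] x_le_y dyck_D iso_D dyck_D' iso_D'; subst n.
have [nn_D end_D count_D] := dyck_nonneg_path dyck_D.
have [nn_D' end_D' count_D'] := dyck_nonneg_path dyck_D'.
rewrite area_areas // in iso_D; rewrite area_areas // in iso_D'.
have [k L] : exists k, last_max (areas 0%N D') k.
  by apply: last_max_exists; rewrite -size_eq0 size_areas count_D'.
apply: (adds_final_max_peak_rem_last_max nn_D end_D nn_D' end_D' L).
apply: (rem_last_max_of_Pw_degrees
  (s := down_degrees (uio_rel x) (size x))
  (c := down_degree (uio_rel (rcons x y)) (size x).+1 (size x))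
  (@areas_is_area_seq 0%N D) (@areas_is_area_seq 0%N D') L).
- by rewrite perm_sym /Pw_degrees size_areas count_D; exact: rel_iso_down_degrees.
- rewrite -down_degrees_uio_rcons // perm_sym /Pw_degrees size_areas count_D'.
  exact: rel_iso_down_degrees.
- by rewrite -down_degrees_uio_rcons //; exact: down_degree_uio_rcons_max.
Qed.
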